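(* Let $E_1,E_2$ be nonempty bounded subsets of $M_a$ and $f:E_1\to E_2$ a surjective $d_a$-isometry; let $p\in E_1$ and $q=f(p)$. Let $F:\mathrm{GS}(E_1,p)\to M_a$ be the map $F\big(p+\sum_i\alpha_i(x_i-p)\big)=q+\sum_i\alpha_i(f(x_i)-q)$ ($x_i\in E_1$, $\alpha_i\in\mathbb R$, $\sum_i\alpha_i(x_i-p)\in M_a$). Then $F(\mathrm{GS}(E_1,p))=\mathrm{GS}(E_2,q)$.
   Context: Let $a=\{a_i\}$ be a sequence of positive reals with $\sum_i a_i^2<\infty$, $M_a=\{x\in\mathbb{R}^{\mathbb N}:\sum_i a_i^2x_i^2<\infty\}$ with inner product $\langle x,y\rangle_a=\sum_i a_i^2x_iy_i$, norm $\|\cdot\|_a$ and metric $d_a(x,y)=\|x-y\|_a$; a $d_a$-isometry is a map preserving $d_a$. Sums are indexed by finite or countable subsets of $\mathbb N$; infinite sums are $\|\cdot\|_a$-limits of partial sums. For $p\in E\subset M_a$, $\mathrm{GS}(E,p)=\{p+\sum_i\alpha_i(x_i-p)\in M_a: x_i\in E,\ \alpha_i\in\mathbb R\}$. (The map $F$ is well defined and is a $d_a$-isometry extending $f$.) *)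

From Stdlib Require Import Reals.
From Coquelicot Require Import Coquelicot.
Open Scope R_scope.

Definition seqR := nat -> R.

Definition weight (a : seqR) : Prop :=
  (forall i, 0 < a i) /\ ex_series (fun i => (a i) ^ 2).

Definition in_Ma (a : seqR) (x : seqR) : Prop :=
  ex_series (fun i => (a i) ^ 2 * (x i) ^ 2).

Definition norm_a (a : seqR) (x : seqR) : R :=
  sqrt (Series (fun i => (a i) ^ 2 * (x i) ^ 2)).

Definition vadd (x y : seqR) : seqR := fun k => x k + y k.
Definition vsub (x y : seqR) : seqR := fun k => x k - y k.
Definition vscal (c : R) (x : seqR) : seqR := fun k => c * x k.

Definition d_a (a : seqR) (x y : seqR) : R := norm_a a (vsub x y).

Fixpoint psum (u : nat -> seqR) (n : nat) : seqR :=
  match n with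
  | O => fun _ => 0
  | S m => vadd (psum u m) (u m)
  end.

(* sum_i u_i = s, the sum being the ||.||_a-limit (in M_a) of the partial
   sums.  Finite sums are the case where u_i = 0 for large i. *)
Definition sum_to_a (a : seqR) (u : nat -> seqR) (s : seqR) : Prop :=
  in_Ma a s /\ is_lim_seq (fun n => norm_a a (vsub (psum u n) s)) 0.

Definition GS (a : seqR) (E : seqR -> Prop) (p : seqR) (y : seqR) : Prop :=
  in_Ma a y /\
  exists (x : nat -> seqR) (alpha : nat -> R) (s : seqR),
    (forall i, E (x i)) /\
    sum_to_a a (fun i => vscal (alpha i) (vsub (x i) p)) s /\
    y = vadd p s.

Definition subset_Ma (a : seqR) (E : seqR -> Prop) : Prop :=
  forall x, E x -> in_Ma a x.

Definition nonempty (E : seqR -> Prop) : Prop := exists x, E x.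

Definition bounded_a (a : seqR) (E : seqR -> Prop) : Prop :=
  exists r, forall x y, E x -> E y -> d_a a x y <= r.

From Stdlib Require Import Reals Lra Psatz ClassicalEpsilon FunctionalExtensionality.
From Coquelicot Require Import Coquelicot.
Open Scope R_scope.

(* F maps GS(E1,p) into GS(E2,q) directly by its defining property.  For the
   converse, write y = q + sum_i alpha_i (f x_i - q).  By polarization the
   isometry f preserves the inner products <x_i - p, x_j - p>_a, so the partial
   sums of sum_i alpha_i (x_i - p) have the same mutual distances as those of
   sum_i alpha_i (f x_i - q).  They are therefore Cauchy and converge to some s,
   M_a being complete (take the coordinatewise limit and apply Fatou's lemma to
   the tails).  Then F (p + s) = y since ||.||_a-limits are unique, the weights
   being positive. *)

Lemma sum_n_nonneg (h : nat -> R) n : (forall k, 0 <= h k) -> 0 <= sum_n h n.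
Proof.
  intros Hh; induction n as [|n IH].
  - rewrite sum_O; apply Hh.
  - rewrite sum_Sn; unfold plus; simpl; specialize (Hh (S n)); lra.
Qed.

Lemma sum_n_le_Series (h : nat -> R) n :
  (forall k, 0 <= h k) -> ex_series h -> sum_n h n <= Series h.
Proof.
  intros Hh Eh; apply is_lim_seq_incr_compare; [exact (Series_correct h Eh)|].
  intro m; rewrite sum_Sn; unfold plus; simpl; specialize (Hh (S m)); lra.
Qed.

Lemma term_le_Series (h : nat -> R) k :
  (forall k, 0 <= h k) -> ex_series h -> h k <= Series h.
Proof.
  intros Hh Eh; eapply Rle_trans; [|exact (sum_n_le_Series h k Hh Eh)].
  destruct k as [|k]; [rewrite sum_O; lra|].
  rewrite sum_Sn; unfold plus; simpl; pose proof (sum_n_nonneg h k Hh); lra.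
Qed.

Lemma Series_nonneg (h : nat -> R) : (forall k, 0 <= h k) -> ex_series h -> 0 <= Series h.
Proof. intros Hh Eh; exact (Rle_trans _ _ _ (Hh O) (term_le_Series h O Hh Eh)). Qed.

Lemma is_lim_seq_sum_n (g : nat -> nat -> R) (h : nat -> R) n :
  (forall k, is_lim_seq (fun m => g m k) (h k)) ->
  is_lim_seq (fun m => sum_n (g m) n) (sum_n h n).
Proof.
  intros Hg; induction n as [|n IH].
  - rewrite sum_O; apply (is_lim_seq_ext (fun m => g m O)); [intro; now rewrite sum_O|apply Hg].
  - rewrite sum_Sn; apply (is_lim_seq_ext (fun m => sum_n (g m) n + g m (S n))).
    + intro; now rewrite sum_Sn.
    + exact (is_lim_seq_plus' _ _ _ _ IH (Hg (S n))).
Qed.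

Lemma Series_le_of_pointwise_lim (g : nat -> nat -> R) (h : nat -> R) (bound : R) :
  (forall m k, 0 <= g m k) ->
  (forall k, is_lim_seq (fun m => g m k) (h k)) ->
  eventually (fun m => ex_series (g m) /\ Series (g m) <= bound) ->
  ex_series h /\ Series h <= bound.
Proof.
  intros Hg Hlim [N HN].
  assert (h_nonneg : forall k, 0 <= h k).
  { intro k; apply (is_lim_seq_le (fun _ => 0) (fun m => g m k) 0 (h k)); auto.
    apply is_lim_seq_const. }
  assert (partial_le : forall n, sum_n h n <= bound).
  { intro n; apply (is_lim_seq_le_loc (fun m => sum_n (g m) n) (fun _ => bound) (sum_n h n) bound).
    - exists N; intros m Hm; destruct (HN m Hm) as [Em Sm].
      exact (Rle_trans _ _ _ (sum_n_le_Series (g m) n (Hg m) Em) Sm).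
    - exact (is_lim_seq_sum_n g h n Hlim).
    - apply is_lim_seq_const. }
  assert (Eh : ex_series h).
  { destruct (ex_finite_lim_seq_incr (sum_n h) bound) as [l Hl]; [|exact partial_le|now exists l].
    intro n; rewrite sum_Sn; unfold plus; simpl; specialize (h_nonneg (S n)); lra. }
  split; [exact Eh|].
  apply (is_lim_seq_le (sum_n h) (fun _ => bound) (Series h) bound partial_le).
  - exact (Series_correct h Eh).
  - apply is_lim_seq_const.
Qed.

Lemma is_lim_seq_sqrt_0 (g : nat -> R) :
  (forall n, 0 <= g n) -> is_lim_seq (fun n => sqrt (g n)) 0 <-> is_lim_seq g 0.
Proof.
  intros Hg; split; intro H.
  - apply (is_lim_seq_ext (fun n => sqrt (g n) * sqrt (g n))); [intro; apply sqrt_sqrt, Hg|].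
    replace (Finite 0) with (Rbar_mult 0 0) by (simpl; f_equal; ring).
    now apply is_lim_seq_mult'.
  - rewrite <- sqrt_0; apply is_lim_seq_continuous; [apply continuity_pt_sqrt; lra|exact H].
Qed.

Section WeightedSpace.

Variable a : seqR.

Definition inner_a (x y : seqR) : R := Series (fun k => a k ^ 2 * x k * y k).
Definition sqnorm_a (x : seqR) : R := Series (fun k => a k ^ 2 * x k ^ 2).

(* [norm_a a x] and [d_a a x y] are convertible to [sqrt (sqnorm_a x)] and
   [sqrt (sqnorm_a (vsub x y))]; the proofs below use this silently. *)

Lemma in_Ma_zero : in_Ma a (fun _ => 0).
Proof.
  apply (ex_series_ext (fun k => 0 * (1/2) ^ k)); [intro; simpl; ring|].
  apply (ex_series_scal_l 0 (fun k => (1/2) ^ k)), ex_series_geom.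
  rewrite Rabs_pos_eq; lra.
Qed.

Lemma ex_series_inner_a x y :
  in_Ma a x -> in_Ma a y -> ex_series (fun k => a k ^ 2 * x k * y k).
Proof.
  intros Hx Hy.
  apply (ex_series_le (fun k => a k ^ 2 * x k * y k) (fun k => a k ^ 2 * x k ^ 2 + a k ^ 2 * y k ^ 2)).
  - intro k; change norm with Rabs; simpl.
    assert (0 <= a k ^ 2) by nra; unfold Rabs; destruct Rcase_abs; nra.
  - exact (ex_series_plus _ _ Hx Hy).
Qed.

Lemma in_Ma_lincomb c d x y :
  in_Ma a x -> in_Ma a y -> in_Ma a (fun k => c * x k + d * y k).
Proof.
  intros Hx Hy.
  apply (ex_series_ext (fun k => c ^ 2 * (a k ^ 2 * x k ^ 2) +
           (2 * c * d * (a k ^ 2 * x k * y k) + d ^ 2 * (a k ^ 2 * y k ^ 2)))); [intro; simpl; ring|].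
  exact (ex_series_plus _ _ (ex_series_scal_l (c ^ 2) _ Hx)
          (ex_series_plus _ _ (ex_series_scal_l (2 * c * d) _ (ex_series_inner_a x y Hx Hy))
                              (ex_series_scal_l (d ^ 2) _ Hy))).
Qed.

Lemma in_Ma_add x y : in_Ma a x -> in_Ma a y -> in_Ma a (vadd x y).
Proof.
  intros Hx Hy; replace (vadd x y) with (fun k => 1 * x k + 1 * y k).
  - exact (in_Ma_lincomb 1 1 x y Hx Hy).
  - extensionality k; unfold vadd; ring.
Qed.

Lemma in_Ma_sub x y : in_Ma a x -> in_Ma a y -> in_Ma a (vsub x y).
Proof.
  intros Hx Hy; replace (vsub x y) with (fun k => 1 * x k + (-1) * y k).
  - exact (in_Ma_lincomb 1 (-1) x y Hx Hy).
  - extensionality k; unfold vsub; ring.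
Qed.

Lemma in_Ma_scal c x : in_Ma a x -> in_Ma a (vscal c x).
Proof.
  intros Hx; replace (vscal c x) with (fun k => c * x k + 0 * x k).
  - exact (in_Ma_lincomb c 0 x x Hx Hx).
  - extensionality k; unfold vscal; ring.
Qed.

Lemma in_Ma_psum u n : (forall i, in_Ma a (u i)) -> in_Ma a (psum u n).
Proof.
  intros Hu; induction n as [|n IH]; [exact in_Ma_zero|exact (in_Ma_add _ _ IH (Hu n))].
Qed.

Lemma inner_a_sym x y : inner_a x y = inner_a y x.
Proof. apply Series_ext; intro; ring. Qed.

Lemma inner_a_addl x y z : in_Ma a x -> in_Ma a y -> in_Ma a z ->
  inner_a (vadd x y) z = inner_a x z + inner_a y z.
Proof.
  intros Hx Hy Hz; unfold inner_a; rewrite <- Series_plus by (apply ex_series_inner_a; auto).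
  apply Series_ext; intro; unfold vadd; ring.
Qed.

Lemma inner_a_scall c x z : inner_a (vscal c x) z = c * inner_a x z.
Proof. unfold inner_a; rewrite <- Series_scal_l; apply Series_ext; intro; unfold vscal; ring. Qed.

Lemma inner_a_0l z : inner_a (fun _ => 0) z = 0.
Proof.
  unfold inner_a; rewrite (Series_ext _ (fun _ => 0 * 0)) by (intro; ring).
  rewrite Series_scal_l; ring.
Qed.

Lemma sqnorm_a_inner x : sqnorm_a x = inner_a x x.
Proof. apply Series_ext; intro; ring. Qed.

Lemma sqnorm_a_sub x y : in_Ma a x -> in_Ma a y ->
  sqnorm_a (vsub x y) = sqnorm_a x + sqnorm_a y - 2 * inner_a x y.
Proof.
  intros Hx Hy; unfold sqnorm_a, inner_a.
  rewrite <- Series_scal_l, <- Series_plus, <- Series_minus; auto.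
  - apply Series_ext; intro; unfold vsub; ring.
  - exact (ex_series_plus _ _ Hx Hy).
  - exact (ex_series_scal_l _ _ (ex_series_inner_a x y Hx Hy)).
Qed.

Lemma sqnorm_a_subC x y : sqnorm_a (vsub x y) = sqnorm_a (vsub y x).
Proof. apply Series_ext; intro; unfold vsub; ring. Qed.

Lemma sqnorm_a_ge0 x : in_Ma a x -> 0 <= sqnorm_a x.
Proof. intros Hx; apply Series_nonneg; [intro; nra|exact Hx]. Qed.

Lemma sqnorm_a_coord_le x k : in_Ma a x -> a k ^ 2 * x k ^ 2 <= sqnorm_a x.
Proof. intros Hx; apply (term_le_Series (fun k => a k ^ 2 * x k ^ 2)); [intro; nra|exact Hx]. Qed.

Lemma sqnorm_a_sub_le x y z : in_Ma a x -> in_Ma a y -> in_Ma a z ->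
  sqnorm_a (vsub x y) <= 2 * sqnorm_a (vsub x z) + 2 * sqnorm_a (vsub z y).
Proof.
  intros Hx Hy Hz.
  pose proof (ex_series_scal_l 2 _ (in_Ma_sub x z Hx Hz)) as Hxz.
  pose proof (ex_series_scal_l 2 _ (in_Ma_sub z y Hz Hy)) as Hzy.
  unfold sqnorm_a; rewrite <- !Series_scal_l, <- Series_plus by assumption.
  apply Series_le; [|exact (ex_series_plus _ _ Hxz Hzy)].
  intro k; unfold vsub.
  pose proof (pow2_ge_0 (a k)); pose proof (pow2_ge_0 (x k - z k - (z k - y k))).
  split; [apply Rmult_le_pos; apply pow2_ge_0|nra].
Qed.

Lemma inner_a_polar x y p : in_Ma a x -> in_Ma a y -> in_Ma a p ->
  inner_a (vsub x p) (vsub y p) =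
  (sqnorm_a (vsub x p) + sqnorm_a (vsub y p) - sqnorm_a (vsub x y)) / 2.
Proof.
  intros Hx Hy Hp.
  replace (sqnorm_a (vsub x y)) with (sqnorm_a (vsub (vsub x p) (vsub y p)))
    by (apply Series_ext; intro; unfold vsub; ring).
  rewrite (sqnorm_a_sub _ _ (in_Ma_sub x p Hx Hp) (in_Ma_sub y p Hy Hp)); field.
Qed.


Local Notation comb c w := (psum (fun i => vscal (c i) (w i))).

Lemma in_Ma_comb (c : nat -> R) w n : (forall i, in_Ma a (w i)) -> in_Ma a (comb c w n).
Proof. intros Hw; apply in_Ma_psum; intro i; apply in_Ma_scal, Hw. Qed.

Section Gram.

Variables u v : nat -> seqR.
Hypotheses (u_Ma : forall i, in_Ma a (u i)) (v_Ma : forall i, in_Ma a (v i)).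
Hypothesis same_gram : forall i j, inner_a (u i) (u j) = inner_a (v i) (v j).

Lemma inner_a_comb_gram_l (c : nat -> R) n j :
  inner_a (comb c u n) (u j) = inner_a (comb c v n) (v j).
Proof.
  induction n as [|n IH]; simpl; [now rewrite !inner_a_0l|].
  rewrite !inner_a_addl, !inner_a_scall, IH, same_gram; auto using in_Ma_comb, in_Ma_scal.
Qed.

Lemma inner_a_comb_gram (c d : nat -> R) n m :
  inner_a (comb c u n) (comb d u m) = inner_a (comb c v n) (comb d v m).
Proof.
  induction n as [|n IH]; simpl; [now rewrite !inner_a_0l|].
  rewrite !inner_a_addl, !inner_a_scall, IH, (inner_a_sym (u n)), (inner_a_sym (v n)),
    inner_a_comb_gram_l; auto using in_Ma_comb, in_Ma_scal.
Qed.

Lemma sqnorm_a_comb_sub_gram (c : nat -> R) n m :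
  sqnorm_a (vsub (comb c u n) (comb c u m)) = sqnorm_a (vsub (comb c v n) (comb c v m)).
Proof. rewrite !sqnorm_a_sub, !sqnorm_a_inner, !inner_a_comb_gram; auto using in_Ma_comb. Qed.

End Gram.

Definition converges_a (P : nat -> seqR) (s : seqR) : Prop :=
  in_Ma a s /\ is_lim_seq (fun n => sqnorm_a (vsub (P n) s)) 0.

Definition cauchy_a (P : nat -> seqR) : Prop :=
  forall eps, 0 < eps -> exists N, forall n m, (N <= n)%nat -> (N <= m)%nat ->
    sqnorm_a (vsub (P n) (P m)) < eps.

Lemma sum_to_a_converges_a u s :
  (forall i, in_Ma a (u i)) -> sum_to_a a u s <-> converges_a (psum u) s.
Proof.
  intros Hu; split; intros [Hs Hlim]; split; auto;
    apply (is_lim_seq_sqrt_0 (fun n => sqnorm_a (vsub (psum u n) s))); auto;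
    intro n; apply sqnorm_a_ge0, in_Ma_sub; auto using in_Ma_psum.
Qed.

Lemma converges_a_cauchy P t : (forall n, in_Ma a (P n)) -> converges_a P t -> cauchy_a P.
Proof.
  intros HP [Ht Hlim] eps Heps; apply is_lim_seq_spec in Hlim.
  assert (Heps4 : 0 < eps / 4) by lra.
  destruct (Hlim (mkposreal _ Heps4)) as [N HN]; exists N; intros n m Hn Hm.
  destruct (Rabs_def2 _ _ (HN n Hn)) as [Hnt _]; destruct (Rabs_def2 _ _ (HN m Hm)) as [Hmt _].
  pose proof (sqnorm_a_sub_le (P n) (P m) t (HP n) (HP m) Ht) as Htri.
  rewrite (sqnorm_a_subC t) in Htri; simpl in *; lra.
Qed.

Section PositiveWeights.

Hypothesis a_pos : forall k, 0 < a k.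

Lemma sqnorm_a_sub_le0 x y : in_Ma a x -> in_Ma a y -> sqnorm_a (vsub x y) <= 0 -> x = y.
Proof.
  intros Hx Hy H0; extensionality k.
  pose proof (sqnorm_a_coord_le _ k (in_Ma_sub _ _ Hx Hy)) as Hk.
  pose proof (pow_lt _ 2 (a_pos k)); pose proof (pow2_ge_0 (vsub x y k)).
  apply Rminus_diag_uniq, Rsqr_0_uniq; change (x k - y k) with (vsub x y k); unfold Rsqr; nra.
Qed.

Lemma converges_a_unique P t t' :
  (forall n, in_Ma a (P n)) -> converges_a P t -> converges_a P t' -> t = t'.
Proof.
  intros HP [Ht Hlim] [Ht' Hlim']; apply sqnorm_a_sub_le0; auto.
  assert (Hsum : is_lim_seq (fun n => 2 * sqnorm_a (vsub (P n) t) + 2 * sqnorm_a (vsub (P n) t'))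
                   (2 * 0 + 2 * 0)).
  { exact (is_lim_seq_plus' _ _ _ _ (is_lim_seq_scal_l _ 2 0 Hlim) (is_lim_seq_scal_l _ 2 0 Hlim')). }
  assert (Hle : Rbar_le (sqnorm_a (vsub t t')) (2 * 0 + 2 * 0)).
  { refine (is_lim_seq_le (fun _ => sqnorm_a (vsub t t')) _ _ _ _ (is_lim_seq_const _) Hsum).
    intro n; rewrite (sqnorm_a_subC (P n) t); exact (sqnorm_a_sub_le t t' (P n) Ht Ht' (HP n)). }
  simpl in Hle; lra.
Qed.

Lemma cauchy_a_coord P k :
  (forall n, in_Ma a (P n)) -> cauchy_a P -> ex_lim_seq_cauchy (fun n => P n k).
Proof.
  intros HP HC eps; pose proof (a_pos k); pose proof (cond_pos eps).
  destruct (HC ((a k * eps) ^ 2)) as [N HN]; [apply pow_lt; nra|].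
  exists N; intros n m Hn Hm.
  pose proof (Rle_lt_trans _ _ _ (sqnorm_a_coord_le _ k (in_Ma_sub _ _ (HP n) (HP m)))
                (HN n m Hn Hm)) as Hk; unfold vsub in Hk.
  assert (Hsq : (P n k - P m k) ^ 2 < eps ^ 2) by nra.
  rewrite <- (Rabs_pos_eq eps) by lra; apply Rsqr_lt_abs_0; unfold Rsqr; nra.
Qed.

Lemma Ma_complete P : (forall n, in_Ma a (P n)) -> cauchy_a P -> exists s, converges_a P s.
Proof.
  intros HP HC; set (s := fun k => real (Lim_seq (fun n => P n k))).
  assert (Ps : forall k, is_lim_seq (fun n => P n k) (s k)).
  { intro k; apply Lim_seq_correct', ex_lim_seq_cauchy_corr, cauchy_a_coord; auto. }
  assert (tail : forall eps, 0 < eps -> exists N, forall n, (N <= n)%nat ->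
                   in_Ma a (vsub (P n) s) /\ sqnorm_a (vsub (P n) s) <= eps).
  { intros eps Heps; destruct (HC eps Heps) as [N HN]; exists N; intros n Hn.
    apply (Series_le_of_pointwise_lim (fun m k => a k ^ 2 * (P n k - P m k) ^ 2)).
    - intros m k; apply Rmult_le_pos; apply pow2_ge_0.
    - intro k; apply (is_lim_seq_continuous (fun y => a k ^ 2 * (P n k - y) ^ 2)); [reg|apply Ps].
    - exists N; intros m Hm; split; [exact (in_Ma_sub _ _ (HP n) (HP m))|left; exact (HN n m Hn Hm)]. }
  exists s; split.
  - destruct (tail 1 Rlt_0_1) as [N HN].
    replace s with (vsub (P N) (vsub (P N) s)) by (extensionality k; unfold vsub; ring).
    apply in_Ma_sub; [apply HP|apply (HN N); auto].
  - apply is_lim_seq_spec; intro eps; pose proof (cond_pos eps).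
    destruct (tail (eps / 2)) as [N HN]; [lra|]; exists N; intros n Hn.
    destruct (HN n Hn) as [Hin Hle].
    rewrite Rminus_0_r, Rabs_pos_eq by (apply sqnorm_a_ge0; exact Hin); lra.
Qed.

Lemma sum_to_a_unique u t t' :
  (forall i, in_Ma a (u i)) -> sum_to_a a u t -> sum_to_a a u t' -> t = t'.
Proof.
  intros Hu Ht Ht'; apply (converges_a_unique (psum u)); [intro; apply in_Ma_psum, Hu| |];
    apply sum_to_a_converges_a; auto.
Qed.

Lemma sum_to_a_gram_transfer u v (c : nat -> R) t :
  (forall i, in_Ma a (u i)) -> (forall i, in_Ma a (v i)) ->
  (forall i j, inner_a (u i) (u j) = inner_a (v i) (v j)) ->
  sum_to_a a (fun i => vscal (c i) (v i)) t ->
  exists s, sum_to_a a (fun i => vscal (c i) (u i)) s.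
Proof.
  intros Hu Hv Hgram Ht.
  assert (Cv : cauchy_a (comb c v)).
  { apply (converges_a_cauchy _ t); [intro; apply in_Ma_comb, Hv|].
    apply sum_to_a_converges_a; auto using in_Ma_scal. }
  assert (Cu : cauchy_a (comb c u)).
  { intros eps Heps; destruct (Cv eps Heps) as [N HN]; exists N; intros n m Hn Hm.
    rewrite (sqnorm_a_comb_sub_gram u v); auto. }
  destruct (Ma_complete _ (fun n => in_Ma_comb c u n Hu) Cu) as [s Hs].
  exists s; apply sum_to_a_converges_a; auto using in_Ma_scal.
Qed.

End PositiveWeights.

End WeightedSpace.

Section IsometricExtension.

Variables (a : seqR) (E1 E2 : seqR -> Prop) (f F : seqR -> seqR) (p : seqR).
Hypotheses (E1_Ma : subset_Ma a E1) (E2_Ma : subset_Ma a E2) (p_E1 : E1 p).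
Hypothesis f_maps : forall x, E1 x -> E2 (f x).
Hypothesis f_onto : forall y, E2 y -> exists x, E1 x /\ f x = y.
Hypothesis f_iso : forall x y, E1 x -> E1 y -> d_a a (f x) (f y) = d_a a x y.
Hypothesis F_def : forall (x : nat -> seqR) (alpha : nat -> R) (s : seqR),
  (forall i, E1 (x i)) ->
  sum_to_a a (fun i => vscal (alpha i) (vsub (x i) p)) s ->
  exists t, sum_to_a a (fun i => vscal (alpha i) (vsub (f (x i)) (f p))) t
            /\ F (vadd p s) = vadd (f p) t.

Lemma f_in_Ma x : E1 x -> in_Ma a (f x).
Proof. intros Hx; exact (E2_Ma _ (f_maps x Hx)). Qed.

Lemma isometry_sqnorm_a x y :
  E1 x -> E1 y -> sqnorm_a a (vsub (f x) (f y)) = sqnorm_a a (vsub x y).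
Proof.
  intros Hx Hy; apply sqrt_inj; [| |exact (f_iso x y Hx Hy)];
    apply sqnorm_a_ge0, in_Ma_sub; auto using f_in_Ma.
Qed.

Lemma isometry_inner_a x y : E1 x -> E1 y ->
  inner_a a (vsub (f x) (f p)) (vsub (f y) (f p)) = inner_a a (vsub x p) (vsub y p).
Proof. intros Hx Hy; rewrite !inner_a_polar, !isometry_sqnorm_a; auto using f_in_Ma. Qed.

Lemma F_maps_GS_into y : (exists z, GS a E1 p z /\ F z = y) -> GS a E2 (f p) y.
Proof.
  intros [z [[_ [x [alpha [s [Hx [Hs ->]]]]]] <-]].
  destruct (F_def x alpha s Hx Hs) as [t [Ht ->]].
  split; [exact (in_Ma_add a _ _ (f_in_Ma p p_E1) (proj1 Ht))|].
  exists (fun i => f (x i)), alpha, t; auto.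
Qed.

Hypothesis a_pos : forall k, 0 < a k.

Lemma F_maps_GS_onto y : GS a E2 (f p) y -> exists z, GS a E1 p z /\ F z = y.
Proof.
  intros [_ [y' [alpha [t [Hy' [Ht ->]]]]]].
  destruct (choice (fun i x => E1 x /\ f x = y' i)) as [x Hx]; [intro i; apply f_onto, Hy'|].
  replace y' with (fun i => f (x i)) in Ht by (extensionality i; apply Hx).
  assert (x_E1 : forall i, E1 (x i)) by (intro; apply Hx).
  assert (u_Ma : forall i, in_Ma a (vsub (x i) p)) by (intro; apply in_Ma_sub; auto).
  assert (v_Ma : forall i, in_Ma a (vsub (f (x i)) (f p))) by (intro; apply in_Ma_sub; auto using f_in_Ma).
  destruct (sum_to_a_gram_transfer a a_pos _ _ alpha t u_Ma v_Ma) as [s Hs]; [|exact Ht|].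
  { intros i j; symmetry; apply isometry_inner_a; auto. }
  destruct (F_def x alpha s x_E1 Hs) as [t' [Ht' HFs]].
  exists (vadd p s); split.
  - split; [exact (in_Ma_add a _ _ (E1_Ma p p_E1) (proj1 Hs))|].
    exists x, alpha, s; auto.
  - rewrite HFs; f_equal.
    exact (sum_to_a_unique a a_pos _ t' t (fun i => in_Ma_scal a _ _ (v_Ma i)) Ht' Ht).
Qed.

End IsometricExtension.

Theorem theorem3p16
  (a : seqR) (E1 E2 : seqR -> Prop) (f : seqR -> seqR) (p : seqR)
  (F : seqR -> seqR) :
  weight a ->
  subset_Ma a E1 -> subset_Ma a E2 ->
  nonempty E1 -> nonempty E2 ->
  bounded_a a E1 -> bounded_a a E2 ->
  (* f : E1 -> E2 is a surjective d_a-isometry *)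
  (forall x, E1 x -> E2 (f x)) ->
  (forall y, E2 y -> exists x, E1 x /\ f x = y) ->
  (forall x y, E1 x -> E1 y -> d_a a (f x) (f y) = d_a a x y) ->
  E1 p ->
  (* F is the map  p + sum_i alpha_i (x_i - p)  |->  q + sum_i alpha_i (f x_i - q),
     with q = f p *)
  (forall (x : nat -> seqR) (alpha : nat -> R) (s : seqR),
      (forall i, E1 (x i)) ->
      sum_to_a a (fun i => vscal (alpha i) (vsub (x i) p)) s ->
      exists t, sum_to_a a (fun i => vscal (alpha i) (vsub (f (x i)) (f p))) t
                /\ F (vadd p s) = vadd (f p) t) ->
  forall y, (exists z, GS a E1 p z /\ F z = y) <-> GS a E2 (f p) y.
Proof.
  intros [a_pos _] E1_Ma E2_Ma _ _ _ _ f_maps f_onto f_iso p_E1 F_def y; split.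
  - exact (F_maps_GS_into a E1 E2 f F p E2_Ma p_E1 f_maps F_def y).
  - exact (F_maps_GS_onto a E1 E2 f F p E1_Ma E2_Ma p_E1 f_maps f_onto f_iso F_def a_pos y).
Qed.
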